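(* Let $n\ge2$ and let $\mathsf{b}$ be a $C_n$-bivaluation. Then the map $\nu$ from formulas to $B_n$ given by $\nu(\alpha)=(\mathsf{b}(\alpha),\mathsf{b}(\neg\alpha),\mathsf{b}(\alpha^1),\dots,\mathsf{b}(\alpha^{n-1}))$ is a valuation belonging to $\mathcal{F}_{C_n}$, and for every formula $\alpha$, $\mathsf{b}(\alpha)=1$ iff $\nu(\alpha)\in D_n$.
   Context: $\Sigma$ has unary $\neg$ and binary $\wedge,\vee,\to$; formulas over a denumerable set of variables; $\alpha^0=\alpha$, $\alpha^{k+1}=\neg(\alpha^k\wedge\neg\alpha^k)$. A $C_n$-bivaluation is a map $\mathsf{b}$ from formulas to $\{0,1\}$ such that: (B1) $\mathsf{b}(\alpha\wedge\beta)=1$ iff $\mathsf{b}(\alpha)=\mathsf{b}(\beta)=1$; (B2) $\mathsf{b}(\alpha\vee\beta)=1$ iff $\mathsf{b}(\alpha)=1$ or $\mathsf{b}(\beta)=1$; (B3) $\mathsf{b}(\alpha\to\beta)=1$ iff $\mathsf{b}(\alpha)=0$ or $\mathsf{b}(\beta)=1$; (B4) $\mathsf{b}(\alpha)=0$ implies $\mathsf{b}(\neg\alpha)=1$; (B5) $\mathsf{b}(\neg\neg\alpha)=1$ implies $\mathsf{b}(\alpha)=1$; (B6)$_n$ $\mathsf{b}(\alpha^{n-1})=\mathsf{b}(\neg(\alpha^{n-1}))$ iff $\mathsf{b}(\alpha^n)=0$; (B7) $\mathsf{b}(\alpha)=\mathsf{b}(\neg\alpha)$ iff $\mathsf{b}(\neg(\alpha^1))=1$;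 (B8) if $\mathsf{b}(\alpha)\ne\mathsf{b}(\neg\alpha)$ and $\mathsf{b}(\beta)\ne\mathsf{b}(\neg\beta)$ then $\mathsf{b}(\alpha\#\beta)\ne\mathsf{b}(\neg(\alpha\#\beta))$ for $\#\in\{\wedge,\vee,\to\}$. Fix $n\ge2$. $B_n=\{z\in\{0,1\}^{n+1}:(z_1\wedge\dots\wedge z_k)\vee z_{k+1}=1\text{ for all }1\le k\le n\}$, with elements $T_n=(1,0,1,\dots,1)$, $t^n_i$ ($0\le i\le n-2$) having $z_1=z_2=1$ and a single $0$ at coordinate $i+3$, $t^n_{n-1}=(1,\dots,1)$, $F_n=(0,1,\dots,1)$. $D_n=\{z:z_1=1\}$, $Boo_n=\{T_n,F_n\}$, $I_n=B_n\setminus Boo_n$. $\mathcal{A}_{C_n}$ on $B_n$: $\tilde\neg z=\{w\in B_n:w_1=z_2,\ w_2\le z_1\}$; for $\#\in\{\wedge,\vee,\to\}$, $z\tilde\#w=\{u\in Boo_n:u_1=z_1\#w_1\}$ if $z,w\in Boo_n$, else $\{u\in B_n:u_1=z_1\#w_1\}$. A valuation is $\nu$ with $\nu(\neg\alpha)\in\tilde\neg\nu(\alpha)$, $\nu(\alpha\#\beta)\in\nu(\alpha)\tilde\#\nu(\beta)$. $\mathcal{F}_{C_n}$: valuations with $\nu(\alpha)=t^n_0\Rightarrow\nu(\alpha\wedge\neg\alpha)=T_n$, and for $1\le k\le n-1$, $\nu(\alpha)=t^n_k\Rightarrow(\nu(\alpha\wedge\neg\alpha)\in I_n$ and $\nu(\alpha^1)=t^n_{k-1})$.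 *)

From mathcomp Require Import all_boot.
Set Implicit Arguments. Unset Strict Implicit. Unset Printing Implicit Defensive.

Inductive formula : Type :=
  | Var of nat
  | Neg of formula
  | And of formula & formula
  | Or  of formula & formula
  | Imp of formula & formula.

Fixpoint cons_pow (a : formula) (k : nat) : formula :=
  match k with
  | 0 => a
  | k'.+1 => Neg (And (cons_pow a k') (Neg (cons_pow a k')))
  end.

Definition bivaluation (n : nat) (b : formula -> bool) : Prop :=
  (forall a c, b (And a c) = b a && b c) /\
  (forall a c, b (Or a c) = b a || b c) /\
  (forall a c, b (Imp a c) = ~~ b a || b c) /\
  (forall a, b a = false -> b (Neg a) = true) /\
  (forall a, b (Neg (Neg a)) = true -> b a = true) /\
  (forall a, b (cons_pow a n.-1) = b (Neg (cons_pow a n.-1))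
             <-> b (cons_pow a n) = false) /\
  (forall a, b a = b (Neg a) <-> b (Neg (cons_pow a 1)) = true) /\
  (forall a c, b a <> b (Neg a) -> b c <> b (Neg c) ->
     b (And a c) <> b (Neg (And a c)) /\
     b (Or a c) <> b (Neg (Or a c)) /\
     b (Imp a c) <> b (Neg (Imp a c))).

(** Elements of {0,1}^(n+1) are (n+1)-tuples of booleans; coordinates are
    numbered 1..n+1 as in the paper. *)
Definition coord (n : nat) (z : n.+1.-tuple bool) (i : nat) : bool :=
  nth false z i.-1.

Definition mk (n : nat) (f : nat -> bool) : n.+1.-tuple bool :=
  [tuple f (val i).+1 | i < n.+1].

(** B_n : (z_1 ∧ ... ∧ z_k) ∨ z_(k+1) = 1 for all 1 <= k <= n. *)
Definition inB (n : nat) (z : n.+1.-tuple bool) : bool :=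
  [forall k : 'I_n, all (coord z) (iota 1 k.+1) || coord z k.+2].

Definition Tn (n : nat) : n.+1.-tuple bool := mk n (fun j => j != 2).
Definition Fn (n : nat) : n.+1.-tuple bool := mk n (fun j => j != 1).
Definition tn (n i : nat) : n.+1.-tuple bool :=
  if i < n.-1 then mk n (fun j => j != i.+3) else mk n (fun _ => true).

Definition inD (n : nat) (z : n.+1.-tuple bool) : bool := coord z 1.
Definition inBoo (n : nat) (z : n.+1.-tuple bool) : bool := (z == Tn n) || (z == Fn n).
Definition inI (n : nat) (z : n.+1.-tuple bool) : bool := inB z && ~~ inBoo z.

(** Multioperations of A_{C_n}, given as membership predicates. *)
Definition neg_mem (n : nat) (z w : n.+1.-tuple bool) : bool :=
  [&& inB w, coord w 1 == coord z 2 & coord w 2 <= coord z 1].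

Definition bin_mem (n : nat) (op : bool -> bool -> bool)
    (z w u : n.+1.-tuple bool) : bool :=
  if inBoo z && inBoo w then inBoo u && (coord u 1 == op (coord z 1) (coord w 1))
  else inB u && (coord u 1 == op (coord z 1) (coord w 1)).

Definition valuation (n : nat) (nu : formula -> n.+1.-tuple bool) : Prop :=
  (forall a, inB (nu a)) /\
  (forall a, neg_mem (nu a) (nu (Neg a))) /\
  (forall a c, bin_mem andb (nu a) (nu c) (nu (And a c))) /\
  (forall a c, bin_mem orb (nu a) (nu c) (nu (Or a c))) /\
  (forall a c, bin_mem implb (nu a) (nu c) (nu (Imp a c))).

Definition inF (n : nat) (nu : formula -> n.+1.-tuple bool) : Prop :=
  valuation nu /\
  (forall a, nu a = tn n 0 -> nu (And a (Neg a)) = Tn n) /\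
  (forall a k, 1 <= k <= n.-1 -> nu a = tn n k ->
     inI (nu (And a (Neg a))) /\ nu (cons_pow a 1) = tn n k.-1).

Definition nu_of (n : nat) (b : formula -> bool) (a : formula) : n.+1.-tuple bool :=
  mk n (fun j => if j == 1 then b a
                 else if j == 2 then b (Neg a)
                 else b (cons_pow a (j - 2))).

From mathcomp Require Import all_boot.
From mathcomp Require Import zify.
Set Implicit Arguments. Unset Strict Implicit.

(* Call a formula x *classical* under b when b x <> b (¬x).
   By (B4) at least one of b x, b (¬x) holds, and by (B1),(B4),(B7) the
   consistency operator behaves as follows: if x^j is classical then x^(j+1)
   is true with false negation, hence classical again; so all later powers of
   a classical power are true.  This single propagation fact drives
   everything:
   - nu(a) is T_n or F_n exactly when a is classical, and nu(a) always lies
     in B_n (a false coordinate forces every later coordinate to be true);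
   - the multioperations of A_{C_n} are respected by (B1)-(B3), (B5) and,
     on Boo_n, by (B8);
   - the restrictions of F_{C_n} follow by reading off the coordinates of
     nu(a) = t^n_k; the last coordinate of nu(a^1) is b(a^n), computed with
     the propagation fact when k < n-1 and with (B6)_n when k = n-1.
   The file first collects coordinate bookkeeping for tuples, then the
   consequences of the bivaluation axioms, then the properties of nu. *)

Lemma nth_mk n (f : nat -> bool) i :
  nth false (mk n f) i = if i < n.+1 then f i.+1 else false.
Proof.
case: ifP => hi; last by rewrite nth_default // size_tuple leqNgt hi.
by have -> : i = val (Ordinal hi) by []; rewrite -(tnth_nth false) tnth_mktuple.
Qed.

Lemma coord_mk n (f : nat -> bool) i : 1 <= i <= n.+1 -> coord (mk n f) i = f i.
Proof. by case: i => [//|i] /= hi; rewrite /coord nth_mk hi. Qed.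

Lemma eq_mk n (f g : nat -> bool) :
  (forall j, 1 <= j <= n.+1 -> f j = g j) -> mk n f = mk n g.
Proof. by move=> fg; apply: eq_mktuple => i; apply: fg; apply: ltn_ord. Qed.

Lemma coord_nu n b a j : 1 <= j <= n.+1 ->
  coord (nu_of n b a) j = if j == 1 then b a else if j == 2 then b (Neg a)
                          else b (cons_pow a (j - 2)).
Proof. exact: coord_mk. Qed.

Lemma coord_tn n k j : 1 <= j <= n.+1 ->
  coord (tn n k) j = (k < n.-1) ==> (j != k.+3).
Proof. by move=> hj; rewrite /tn; case: ifP => _; rewrite coord_mk. Qed.

Lemma Boo_coord12 n (z : n.+1.-tuple bool) : 0 < n -> inBoo z -> coord z 1 != coord z 2.
Proof.
move=> n0; have h1 : 1 <= 1 <= n.+1 by []. have h2 : 1 <= 2 <= n.+1 by lia.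
by case/orP => /eqP ->; rewrite !coord_mk.
Qed.

Lemma inB_pairwise n (z : n.+1.-tuple bool) :
  (forall i j, 1 <= i -> i < j -> j <= n.+1 -> coord z i || coord z j) -> inB z.
Proof.
move=> H; apply/forallP => k.
case E: (coord z k.+2); first by rewrite orbT.
rewrite orbF; apply/allP => i; rewrite mem_iota => /andP[h1 h2].
by have := H i k.+2 h1; rewrite E orbF; apply; have := ltn_ord k; lia.
Qed.

Lemma cons_pow_add a p m : cons_pow (cons_pow a p) m = cons_pow a (m + p).
Proof. by elim: m => //= m ->. Qed.

Section Bivaluation.
Variables (n : nat) (b : formula -> bool).
Hypothesis hb : bivaluation n b.

Lemma bv_and a c : b (And a c) = b a && b c.     Proof. by case: hb. Qed.
Lemma bv_or a c : b (Or a c) = b a || b c.       Proof. by case: hb => _ []. Qed.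
Lemma bv_imp a c : b (Imp a c) = implb (b a) (b c).
Proof. by case: hb => _ [_ [-> _]]; case: (b a). Qed.

Lemma bv_excluded_middle x : b x || b (Neg x).
Proof. by case: hb => _ [_ [_ [B4 _]]]; case E: (b x); rewrite //= B4. Qed.

Lemma bv_double_neg a : b (Neg (Neg a)) -> b a.
Proof. by case: hb => _ [_ [_ [_ [B5 _]]]]; apply: B5. Qed.

Lemma bv_neg_cons_pow_S a j :
  b (Neg (cons_pow a j.+1)) = (b (cons_pow a j) == b (Neg (cons_pow a j))).
Proof.
case: hb => _ [_ [_ [_ [_ [_ [B7 _]]]]]].
by have [h1 h2] := B7 (cons_pow a j); apply/idP/eqP => [/h2|/h1].
Qed.

Lemma bv_cons_pow_S a j :
  ~~ (b (cons_pow a j) && b (Neg (cons_pow a j))) -> b (cons_pow a j.+1).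
Proof.
case: hb => _ [_ [_ [B4 _]]] h /=; apply: B4; rewrite bv_and; exact: negbTE.
Qed.

Lemma classical_step a p : b (cons_pow a p) != b (Neg (cons_pow a p)) ->
  b (cons_pow a p.+1) && ~~ b (Neg (cons_pow a p.+1)).
Proof.
move=> d; rewrite bv_neg_cons_pow_S d bv_cons_pow_S //.
by move: d; case: (b _); case: (b _).
Qed.

Lemma classical_later_true a p q : b (cons_pow a p) != b (Neg (cons_pow a p)) ->
  p < q -> b (cons_pow a q).
Proof.
move=> d; suff classical_after r : p < r ->
    b (cons_pow a r) && ~~ b (Neg (cons_pow a r)) by move/classical_after/andP => [].
elim: r => [//|r IH]; rewrite ltnS leq_eqVlt => /orP[/eqP <-|/IH]; first exact: classical_step.
by case/andP => t f; apply: classical_step; rewrite t (negbTE f).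
Qed.

Lemma false_classical x : b x = false -> b x != b (Neg x).
Proof. by move=> E; have := bv_excluded_middle x; rewrite E /= => ->. Qed.

Lemma neg_cons_pow_true a p : b (Neg a) ->
  (forall m, m < p -> b (cons_pow a m)) -> forall m, m <= p -> b (Neg (cons_pow a m)).
Proof.
move=> na t; elim=> [//|m IH] hm.
by rewrite bv_neg_cons_pow_S IH ?t //; apply: ltnW.
Qed.

Hypothesis hn : 2 <= n.

Lemma nu_classical a : b a != b (Neg a) -> nu_of n b a = if b a then Tn n else Fn n.
Proof.
move=> d; have later j : 2 < j -> b (cons_pow a (j - 2)).
  by move=> hj; apply: (@classical_later_true a 0) => //; lia.
case E: (b a) d => d; apply: eq_mk => -[|[|[|j]]] hj //=; rewrite ?E //;
  by [exact: (later j.+3) | move: d; case: (b (Neg a))].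
Qed.

Lemma Boo_nu a : inBoo (nu_of n b a) = (b a != b (Neg a)).
Proof.
apply/idP/idP => [/(Boo_coord12 (ltnW hn))|/nu_classical ->].
  by rewrite !coord_nu //; lia.
by case: (b a); rewrite /inBoo eqxx ?orbT.
Qed.

(* nu takes values in B_n: a false coordinate forces all later ones. *)
Lemma inB_nu a : inB (nu_of n b a).
Proof.
apply: inB_pairwise => i j h1 hij hj; rewrite !coord_nu; try lia.
have later p : b (cons_pow a p) != b (Neg (cons_pow a p)) -> p < j - 2 ->
    b (cons_pow a (j - 2)).
  by move=> d hp; apply: (classical_later_true d); lia.
have -> : (j == 1) = false by lia.
case: ifP => [i1|i1].
  case: ifP => j2; first exact: bv_excluded_middle.
  case E: (b a) => //; apply: (later 0); [exact: false_classical | lia].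
case: ifP => [i2|i2]; have -> : (j == 2) = false by lia.
  case E: (b (Neg a)) => //; apply: (later 0); last by lia.
  by have := bv_excluded_middle a; rewrite /= E orbF => ->.
case E: (b (cons_pow a (i - 2))) => //.
by apply: (later (i - 2)); [exact: false_classical | lia].
Qed.

Lemma bin_nu (K : formula -> formula -> formula) op :
  (forall a c, b (K a c) = op (b a) (b c)) ->
  (forall a c, b a <> b (Neg a) -> b c <> b (Neg c) -> b (K a c) <> b (Neg (K a c))) ->
  forall a c, bin_mem op (nu_of n b a) (nu_of n b c) (nu_of n b (K a c)).
Proof.
move=> Hop HB8 a c; rewrite /bin_mem !Boo_nu !coord_nu /=; try lia.
rewrite Hop eqxx !andbT; case: ifP => [/andP[/eqP h1 /eqP h2]|_]; last exact: inB_nu.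
by rewrite -Hop; apply/eqP; apply: HB8.
Qed.

(* The negation is respected: its second coordinate condition is (B5). *)
Lemma neg_nu a : neg_mem (nu_of n b a) (nu_of n b (Neg a)).
Proof.
rewrite /neg_mem inB_nu !coord_nu /=; try lia.
by rewrite eqxx; case E: (b (Neg (Neg a))); rewrite ?(bv_double_neg E).
Qed.

Lemma valuation_nu : valuation (nu_of n b).
Proof.
case: hb => _ [_ [_ [_ [_ [_ [_ B8]]]]]].
split; [exact: inB_nu | split; [exact: neg_nu | split; [|split]]].
- by apply: bin_nu => [|a c h1 h2]; [exact: bv_and | case: (B8 a c h1 h2)].
- by apply: bin_nu => [|a c h1 h2]; [exact: bv_or | case: (B8 a c h1 h2) => _ []].
- by apply: bin_nu => [|a c h1 h2]; [exact: bv_imp | case: (B8 a c h1 h2) => _ []].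
Qed.

Lemma nu_tn_values a k : nu_of n b a = tn n k ->
  [/\ b a, b (Neg a) &
      forall m, 1 <= m <= n.-1 -> b (cons_pow a m) = (k < n.-1) ==> (m != k.+1)].
Proof.
move=> E; have cf j : 1 <= j <= n.+1 -> coord (nu_of n b a) j = coord (tn n k) j.
  by rewrite E.
have c1 := cf 1 ltac:(lia); have c2 := cf 2 ltac:(lia).
rewrite !coord_nu ?coord_tn /= ?implybT in c1 c2; try lia.
split=> // m hm.
case: m hm => [//|m] hm; have := cf m.+3 ltac:(lia).
by rewrite coord_nu ?coord_tn /= ?eqSS; try lia.
Qed.

(* The value of a^n when nu(a) = t^n_k: by propagation if k < n-1, and by
   (B6)_n if k = n-1 (all of a^0..a^(n-1) and their negations then hold). *)
Lemma cons_pow_n_tn a k : nu_of n b a = tn n k -> b (cons_pow a n) = (k < n.-1).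
Proof.
case/nu_tn_values => ta na cs; case: (ltnP k n.-1) => hk.
  have f : b (cons_pow a k.+1) = false by rewrite cs ?hk ?eqxx //; lia.
  by apply: (classical_later_true (false_classical f)); lia.
have t m : m < n -> b (cons_pow a m).
  by case: m => [//|m] hm; rewrite cs ?ltnNge ?hk //; lia.
have nt := neg_cons_pow_true na t.
case: hb => _ [_ [_ [_ [_ [B6 _]]]]]; apply/(proj1 (B6 a)).
by rewrite t ?nt; lia.
Qed.

Lemma nu_t0 a : nu_of n b a = tn n 0 -> nu_of n b (And a (Neg a)) = Tn n.
Proof.
case/nu_tn_values => ta na cs.
have f1 : b (cons_pow a 1) = false by rewrite cs ?eqxx ?implybF; lia.
have ba : b (And a (Neg a)) by rewrite bv_and ta na.
by rewrite /= in f1; rewrite nu_classical ba // f1.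
Qed.

Lemma nu_tk a k : 1 <= k <= n.-1 -> nu_of n b a = tn n k ->
  inI (nu_of n b (And a (Neg a))) /\ nu_of n b (cons_pow a 1) = tn n k.-1.
Proof.
move=> hk E; have an := cons_pow_n_tn E; case/nu_tn_values: E => ta na cs.
have t1 : b (cons_pow a 1) by rewrite cs; lia.
split; first by rewrite /inI inB_nu Boo_nu bv_and ta na; move: t1 => /= ->.
have nt1 : b (Neg (cons_pow a 1)) by rewrite bv_neg_cons_pow_S /= ta na.
rewrite /tn; have -> : k.-1 < n.-1 by lia.
(* Coordinate j+3 of nu(a^1) is b((a^1)^(j+1)) = b(a^(j+2)). *)
apply: eq_mk => -[|[|[|j]]] hj //; have -> : j.+3 - 2 = j.+1 by lia.
change (b (cons_pow (cons_pow a 1) j.+1) = (j.+3 != k.-1.+3)).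
rewrite cons_pow_add addn1 !eqSS; case: (ltnP j.+2 n) => hj2.
  by rewrite cs; [case: ltnP => hk2 /=; apply/idP/idP; lia | lia].
have -> : j.+2 = n by lia.
by rewrite an; apply/idP/idP; lia.
Qed.

End Bivaluation.

Theorem mainTheorem12 (n : nat) (b : formula -> bool) :
  2 <= n -> bivaluation n b ->
  inF (nu_of n b) /\ (forall a, b a = true <-> inD (nu_of n b a)).
Proof.
move=> hn hb; split.
  split; [exact: valuation_nu | split].
  - exact: nu_t0.
  - exact: nu_tk.
by move=> a; rewrite /inD coord_nu //; lia.
Qed.
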